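(* In the setting of the context, let $c_p(\epsilon)$, $p\in\mathrm{JK}$, be arbitrary functions of $\epsilon$ independent of $\mathbf t$, and let $\mathcal F_\alpha(\mathbf t,\epsilon)=\sum_{p\in\mathrm{JK}}c_p(\epsilon)e^{-H_\epsilon(p)}$ (a generic solution of the classical equivariant cohomology relations). Then $\hat I_{X_{\mathbf t}}\cdot\mathcal F_\alpha(\mathbf t,\epsilon)$ is a formal solution of the equivariant Picard–Fuchs equations, i.e.\ $\mathrm{PF}^{\mathrm{eq}}_\gamma\,\hat I_{X_{\mathbf t}}\cdot\mathcal F_\alpha=0$ for all $\gamma\in\Lambda$.
   Context: $Q=(Q^a_i)$ integer $r\times N$ matrix with columns $Q_i$; chamber $\mathcal K\ni\mathbf t$ of regular values of $\mu^a(Z)=\sum_iQ^a_i|Z^i|^2$; $X_{\mathbf t}=\mu^{-1}(\mathbf t)/U(1)^r$ smooth. JK $=\{p=(i_1,\dots,i_r):\mathcal K\subseteq\mathrm{Cone}(Q_{i_1},\dots,Q_{i_r})\}$, $Q_p=(Q_{i_1}|\cdots|Q_{i_r})$ (invertible over $\mathbb{Z}$), $H_\epsilon(p)=\sum_{a,b}\epsilon_{i_b}(Q_p^{-1})^b_at^a$. $\Lambda=\mathcal K^\vee\cap\mathbb{Z}^r$, $\mathcal K^\vee=\{\mathbf d:\sum_ad_at^a\ge0\ \forall\mathbf t\in\mathcal K\}$. $\mathcal D_i=\epsilon_i+\sum_aQ^a_i\partial/\partial t^a$; Pochhammer $(z)_n=\Gamma(z+n)/\Gamma(z)$. Givental operator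 $\hat I_{X_{\mathbf t}}=\sum_{\mathbf d\in\Lambda}e^{-\lambda\sum_ad_at^a}\prod_{i=1}^N(\mathcal D_i/\lambda)_{-\sum_ad_aQ^a_i}$. Equivariant Picard–Fuchs operators $\mathrm{PF}^{\mathrm{eq}}_\gamma=\prod_{\{i:\sum_a\gamma_aQ^a_i>0\}}(\mathcal D_i/\lambda)_{\sum_a\gamma_aQ^a_i}-e^{-\lambda\sum_a\gamma_at^a}\prod_{\{i:\sum_a\gamma_aQ^a_i\le0\}}(\mathcal D_i/\lambda)_{-\sum_a\gamma_aQ^a_i}$. *)

From HB Require Import structures.
From mathcomp Require Import all_boot all_order all_algebra.
From mathcomp Require Import boolp classical_sets topology normedtype reals.
Set Implicit Arguments. Unset Strict Implicit. Unset Printing Implicit Defensive.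
Import Order.TTheory GRing.Theory Num.Theory.
Import numFieldNormedType.Exports.
Local Open Scope ring_scope.
Local Open Scope classical_set_scope.

Section Defs.
Variables (R : realType) (F : numFieldType) (r N : nat) (Q : 'M[int]_(r, N)).

Definition colR (i : 'I_N) : 'rV[R]_r := \row_a (Q a i)%:~R.

Definition coneS (S : {set 'I_N}) : set 'rV[R]_r :=
  [set t | exists x : 'I_N -> R, (forall i, 0 <= x i) /\
     t = \sum_(i in S) x i *: colR i].

Definition spans (S : {set 'I_N}) : Prop :=
  forall v : 'rV[R]_r, exists x : 'I_N -> R, v = \sum_(i in S) x i *: colR i.

(* regular values of mu(Z) = sum_i Q_i |Z^i|^2 lying in its image *)
Definition regular (t : 'rV[R]_r) : Prop :=
  coneS [set: 'I_N]%SET t /\ forall S, ~ spans S -> ~ coneS S t.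

Definition chamber (K : set 'rV[R]_r) : Prop :=
  exists t0, regular t0 /\ K = connected_component [set t | regular t] t0.

Definition Pidx := {ffun 'I_r -> 'I_N}.

Definition coneP (p : Pidx) : set 'rV[R]_r :=
  [set t | exists x : 'I_r -> R, (forall b, 0 <= x b) /\
     t = \sum_b x b *: colR (p b)].

Definition JK (K : set 'rV[R]_r) (p : Pidx) : Prop := K `<=` coneP p.

Definition Qp (p : Pidx) : 'M[int]_r := \matrix_(a, b) Q a (p b).

Definition Lam (K : set 'rV[R]_r) : set 'rV[int]_r :=
  [set d | forall t, K t -> 0 <= \sum_a (d 0 a)%:~R * t 0 a].

Definition dQ (d : 'rV[int]_r) (i : 'I_N) : int := \sum_a d 0 a * Q a i.

(* Pochhammer (z)_n = Gamma(z+n)/Gamma(z) for integer n *)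
Definition poch (z : F) (n : int) : F :=
  match n with
  | Posz m => \prod_(k < m) (z + k%:R)
  | Negz m => (\prod_(k < m.+1) (z - k.+1%:R))^-1
  end.

Variables (eps : 'I_N -> F) (lam : F).

(* coefficient of t^a in H_eps(p) = sum_{a,b} eps_{i_b} (Q_p^-1)^b_a t^a *)
Definition hcoef (p : Pidx) (a : 'I_r) : F :=
  \sum_b eps (p b) * ((invmx (Qp p)) b a)%:~R.

(* A formal exponential sum s represents
     sum_p sum_d  s p d * exp( - lam * (d . t) - H_eps(p)(t) ).           *)
Definition fser := Pidx -> 'rV[int]_r -> F.

(* eigenvalue of D_i = eps_i + sum_a Q^a_i d/dt^a on the basis element
   exp(-lam d.t - H_eps(p)) *)
Definition eig (p : Pidx) (d : 'rV[int]_r) (i : 'I_N) : F :=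
  eps i - \sum_a (Q a i)%:~R * (lam * (d 0 a)%:~R + hcoef p a).

Definition pochOp (P : pred 'I_N) (n : 'I_N -> int) (s : fser) : fser :=
  fun p d => (\prod_(i | P i) poch (eig p d i / lam) (n i)) * s p d.

(* multiplication by exp(-lam gamma.t) *)
Definition shiftOp (g : 'rV[int]_r) (s : fser) : fser :=
  fun p d => s p (d - g).

(* Givental operator  I = sum_{d in Lambda} e^{-lam d.t} prod_i (D_i/lam)_{-d.Q_i}
   applied to a formal sum s whose d-support is contained in the finite list S
   (the coefficient at d' collects the terms d = d' - e, e in S). *)
Definition Ihat (K : set 'rV[R]_r) (S : seq 'rV[int]_r) (s : fser) : fser :=
  fun p d' => \sum_(e <- S)
     (if (d' - e) \in Lam K then
        shiftOp (d' - e) (pochOp predT (fun i => - dQ (d' - e) i) s) p d'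
      else 0).

Definition PFeq (g : 'rV[int]_r) (s : fser) : fser :=
  fun p d => pochOp (fun i => 0 < dQ g i) (fun i => dQ g i) s p d
           - shiftOp g (pochOp (fun i => dQ g i <= 0) (fun i => - dQ g i) s) p d.

Definition Falpha (K : set 'rV[R]_r) (c : Pidx -> F) : fser :=
  fun p d => if `[< JK K p >] && (d == 0) then c p else 0.

End Defs.

From HB Require Import structures.
From mathcomp Require Import all_boot all_order all_algebra.
From mathcomp Require Import boolp classical_sets topology normedtype reals.
Set Implicit Arguments. Unset Strict Implicit.
Import Order.TTheory GRing.Theory Num.Theory.
Import numFieldNormedType.Exports.
Local Open Scope ring_scope.
Local Open Scope classical_set_scope.

(* On the exponential e^{-λ d·t - H_ε(p)} the operator D_i/λ acts as the scalar
   x_i - d·Q_i, where x_i is its eigenvalue on e^{-H_ε(p)}; and x_{i_b} = 0 for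
   the columns of Q_p, because H_ε(p) is built from Q_p^{-1}.  Both terms of the
   coefficient of PF_γ Î F_α at d therefore collapse, by (x)_c (x+c)_b = (x)_{c+b},
   to the same product ∏_i (x_i)_{max(γ·Q_i,0) - d·Q_i}, taken when d ∈ Λ and
   when d - γ ∈ Λ respectively.  Since Λ is additive, the only mismatch is d ∈ Λ,
   d - γ ∉ Λ; then d - γ pairs negatively with some column Q_{i_b} of the JK cone,
   and the factor (0)_k with k > 0 at i_b kills the product.  Keeping the x_i away
   from the positive integers makes the Pochhammer symbols of negative index
   honest inverses, so that the addition law holds. *)

Section Pochhammer.
Variable F : numFieldType.
Implicit Types (c n m : int).

Lemma poch0n n : 0 < n -> poch (0 : F) n = 0.
Proof. by case: n => [[|m]|//] // _; rewrite /poch big_ord_recl /= add0r mul0r. Qed.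

Lemma poch0_maxB n m : n < m -> poch (0 : F) (Num.max m 0 - n) = 0.
Proof. by move=> nm; rewrite poch0n // subr_gt0 (lt_le_trans nm) // le_max lexx. Qed.

Variable x : F.
Hypothesis x_notin_pnat : forall k : nat, (0 < k)%N -> x != k%:R.

Lemma pochS c : poch x (c + 1) = poch x c * (x + c%:~R).
Proof.
case: c => [m|m].
  by rewrite -[_ + 1]PoszD addn1 /poch big_ord_recr.
have hm : x - m.+1%:R != 0 by rewrite subr_eq0 x_notin_pnat.
case: m hm => [|m] hm.
  rewrite [Negz 0 + 1]/= /poch big_ord_recr big_ord0 /= NegzE mulrNz.
  by rewrite big_ord0 mul1r pmulrn mulVf.
have -> : Negz m.+1 + 1 = Negz m by rewrite !NegzE -addn1 PoszD opprD addrK.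
by rewrite /poch [in RHS]big_ord_recr /= NegzE mulrNz pmulrn invfM -mulrA mulVf ?mulr1.
Qed.

Lemma pochD c (b : nat) : poch x c * poch (x + c%:~R) b = poch x (c + b).
Proof.
elim: b => [|b IH]; first by rewrite /poch big_ord0 mulr1 addr0.
rewrite [poch (x + _) _]/poch big_ord_recr /= -/(poch _ (Posz b)) mulrA IH.
by rewrite -addn1 PoszD addrA pochS rmorphD /= addrA pmulrn.
Qed.

Lemma pochD_pos n m :
  (if 0 < m then poch (x - n%:~R) m else 1) * poch x (- n)
  = poch x (Num.max m 0 - n).
Proof.
case: ifPn => [m_gt0|m_le0].
  rewrite max_l ?ltW // mulrC -rmorphN [in RHS]addrC.
  by case: m m_gt0 => [m|//] _; rewrite pochD.
rewrite -leNgt in m_le0.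
by rewrite (max_r m_le0) mul1r sub0r.
Qed.

Lemma pochD_npos n m :
  (if m <= 0 then poch (x - (n - m)%:~R) (- m) else 1) * poch x (- (n - m))
  = poch x (Num.max m 0 - n).
Proof.
case: ifPn => [m_le0|m_gt0]; last first.
  by rewrite -ltNge in m_gt0; rewrite max_l ?ltW // mul1r opprB.
rewrite (max_r m_le0) sub0r mulrC -rmorphN.
have [k ->] : exists k : nat, m = - k%:Z by exists `|m|%N; rewrite lez0_abs ?opprK.
by rewrite opprK pochD opprD subrK.
Qed.

End Pochhammer.

Section PicardFuchs.
Variables (R : realType) (F : numFieldType) (r N : nat) (Q : 'M[int]_(r, N)).
Variables (eps : 'I_N -> F) (lam : F).
Hypothesis lam_neq0 : lam != 0.
Implicit Types (K : set 'rV[R]_r) (p : Pidx r N) (d e g : 'rV[int]_r).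

Local Notation eig0 p i := (eig Q eps lam p 0 i / lam).

Lemma dQB d g i : dQ Q (d - g) i = dQ Q d i - dQ Q g i.
Proof. by rewrite /dQ -sumrB; apply: eq_bigr => a _; rewrite !mxE mulrBl. Qed.

Lemma eigE p d i : eig Q eps lam p d i = eig Q eps lam p 0 i - lam * (dQ Q d i)%:~R.
Proof.
rewrite /eig /dQ rmorph_sum mulr_sumr -addrA -opprD -big_split /=.
congr (_ - _); apply: eq_bigr => a _.
by rewrite mxE mulr0 add0r intrM mulrDr addrC mulrCA [_ * (Q a i)%:~R]mulrC.
Qed.

Lemma eig_divE p d i : eig Q eps lam p d i / lam = eig0 p i - (dQ Q d i)%:~R.
Proof. by rewrite eigE mulrBl mulrAC divff ?mul1r. Qed.

Lemma eig_col p b : Qp Q p \in unitmx -> eig Q eps lam p 0 (p b) = 0.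
Proof.
move=> Qp_unit; rewrite /eig.
have -> : \sum_a (Q a (p b))%:~R * (lam * ((0 : 'rV[int]_r) 0 a)%:~R + hcoef Q eps p a)
   = \sum_b' eps (p b') * ((invmx (Qp Q p) *m Qp Q p) b' b)%:~R.
  under eq_bigr => a _ do rewrite mxE mulr0 add0r /hcoef mulr_sumr.
  rewrite exchange_big /=; apply: eq_bigr => b' _.
  rewrite mxE rmorph_sum mulr_sumr; apply: eq_bigr => a _.
  by rewrite mxE rmorphM /= mulrCA (mulrC (Q a (p b))%:~R).
rewrite mulVmx // (bigD1 b) //= big1 => [|b' nb]; first by rewrite !mxE eqxx addr0 mulr1 subrr.
by rewrite !mxE (negbTE nb) mulr0.
Qed.

Lemma Lam_addr K d e : Lam K d -> Lam K e -> Lam K (d + e).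
Proof.
move=> Ld Le t Kt; rewrite (eq_bigr (fun a => (d 0 a)%:~R * t 0 a + (e 0 a)%:~R * t 0 a)).
  by rewrite big_split /= addr_ge0 ?Ld ?Le.
by move=> a _; rewrite mxE intrD mulrDl.
Qed.

Lemma Lam_JK K p e : JK Q K p -> (forall b, 0 <= dQ Q e (p b)) -> Lam K e.
Proof.
move=> JKp e_ge0 t Kt; have [x [x_ge0 ->]] := JKp t Kt.
under eq_bigr => a _ do rewrite summxE mulr_sumr.
rewrite exchange_big /=; apply: sumr_ge0 => b _.
have -> : \sum_a (e 0 a)%:~R * (x b *: colR R Q (p b)) 0 a = x b * (dQ Q e (p b))%:~R.
  rewrite /dQ rmorph_sum mulr_sumr; apply: eq_bigr => a _.
  by rewrite !mxE rmorphM /= mulrCA.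
by rewrite mulr_ge0 // ler0z.
Qed.

Lemma Ihat0E K s p d : Ihat Q eps lam K [:: 0] s p d =
  if d \in Lam K then (\prod_i poch (eig0 p i) (- dQ Q d i)) * s p 0 else 0.
Proof. by rewrite /Ihat big_cons big_nil addr0 subr0 /shiftOp /pochOp subrr. Qed.

Lemma PFeq_Ihat0E K g s p d :
  (forall i k, (0 < k)%N -> eig0 p i != k%:R) ->
  PFeq Q eps lam g (Ihat Q eps lam K [:: 0] s) p d =
  ((d \in Lam K)%:R - (d - g \in Lam K)%:R)
  * \prod_i poch (eig0 p i) (Num.max (dQ Q g i) 0 - dQ Q d i) * s p 0.
Proof.
move=> eig0_notin_pnat; rewrite /PFeq /shiftOp /pochOp !Ihat0E.
set W := \prod_i poch _ (Num.max _ _ - _).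
have raise : \prod_(i | 0 < dQ Q g i) poch (eig Q eps lam p d i / lam) (dQ Q g i)
    * \prod_i poch (eig0 p i) (- dQ Q d i) = W.
  rewrite big_mkcond -big_split; apply: eq_bigr => i _; rewrite /= eig_divE.
  exact: pochD_pos (eig0_notin_pnat i) _ _.
have lower : \prod_(i | dQ Q g i <= 0) poch (eig Q eps lam p (d - g) i / lam) (- dQ Q g i)
    * \prod_i poch (eig0 p i) (- dQ Q (d - g) i) = W.
  rewrite big_mkcond -big_split; apply: eq_bigr => i _; rewrite /= eig_divE dQB.
  exact: pochD_npos (eig0_notin_pnat i) _ _.
case: (d \in Lam K); case: (d - g \in Lam K);
  by rewrite ?mulr0 ?mulrA ?raise ?lower -mulrA mulrBl ?mul1r ?mul0r.
Qed.

End PicardFuchs.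

Theorem mainTheorem6 (R : realType) (F : numFieldType) (r N : nat)
  (Q : 'M[int]_(r, N)) (K : set 'rV[R]_r)
  (hK : chamber Q K)
  (hsmooth : forall p : Pidx r N, JK Q K p ->
     \det (Qp Q p) = 1 \/ \det (Qp Q p) = -1)
  (eps : 'I_N -> F) (lam : F) (hlam : lam != 0)
  (hgen : forall p : Pidx r N, JK Q K p -> forall i : 'I_N, i \notin codom p ->
     forall k : nat, (0 < k)%N -> eig Q eps lam p 0 i != k%:R * lam)
  (c : Pidx r N -> F) (g : 'rV[int]_r) (hg : Lam K g) :
  forall (p : Pidx r N) (d : 'rV[int]_r),
    PFeq Q eps lam g (Ihat Q eps lam K [:: 0] (Falpha Q K c)) p d = 0.
Proof.
move=> p d.
have [JKp|nJKp] := pselect (JK Q K p); last first.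
  by rewrite /PFeq /shiftOp /pochOp !Ihat0E /Falpha asboolF // !(mulr0, if_same) subrr.
have Qp_unit : Qp Q p \in unitmx.
  by rewrite unitmxE; case: (hsmooth p JKp) => ->; rewrite ?unitr1 ?unitrN1.
have eig0_notin_pnat i k : (0 < k)%N -> eig Q eps lam p 0 i / lam != k%:R.
  move=> k_gt0; have [/codomP[b ->]|i_notin] := boolP (i \in codom p).
    by rewrite eig_col // mul0r eq_sym pnatr_eq0 -lt0n.
  by apply: contra (hgen p JKp i i_notin k k_gt0) => /eqP <-; rewrite divfK.
rewrite PFeq_Ihat0E //.
have [dL|dNL] := boolP (d \in Lam K); have [dgL|dgNL] := boolP (d - g \in Lam K).
- by rewrite subrr !mul0r.
- have [b gb] : exists b, dQ Q (d - g) (p b) < 0.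
    apply/not_existsP => gb_ge0; case/negP: dgNL; apply/mem_set.
    by apply: (Lam_JK JKp) => b; rewrite leNgt; apply/negP/gb_ge0.
  rewrite dQB subr_lt0 in gb.
  by rewrite (bigD1 (p b)) //= eig_col // mul0r poch0_maxB // !(mul0r, mulr0).
- case/negP: dNL; apply/mem_set; rewrite -(subrK g d).
  exact: Lam_addr (set_mem dgL) hg.
- by rewrite subrr !mul0r.
Qed.
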